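(* Every element $\theta$ of the Thompson group $T$ is piecewise dynamical: for every interval of linearity $I$ of $\theta$ there exist $m,n\in\mathbb{N}_0$ such that $g^m\circ\theta=g^n$ on $I$.
   Context: $\mathbb{T}$ is the unit circle with angular coordinate $\theta\in\mathbb{R}/\mathbb{Z}$; dyadic points are those with angular coordinate $k/2^j$. $g(z)=z^2$ is the doubling map of $\mathbb{T}$. The Thompson group $T$ is the group of orientation-preserving homeomorphisms of $\mathbb{T}$ that are piecewise linear in the angular coordinate with finitely many break points, all dyadic, with slopes integer powers of $2$, and mapping dyadic points to dyadic points. *)

From HB Require Import structures.
From mathcomp Require Import all_boot all_order all_algebra.
From mathcomp Require Import all_classical all_reals.
From mathcomp Require Import all_analysis.
Set Implicit Arguments. Unset Strict Implicit. Unset Printing Implicit Defensive.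
Import Order.TTheory GRing.Theory Num.Theory numFieldNormedType.Exports.
Local Open Scope ring_scope.

(* Circle T = R/Z with angular coordinate; a circle map is represented
   by a lift F : R -> R.  Points of the circle are reals modulo 1. *)

Definition dyadic {R : realType} (x : R) : Prop :=
  exists (k : int) (j : nat), x = k%:~R / 2 ^+ j.

Definition circ_eq {R : realType} (x y : R) : Prop :=
  exists k : int, x - y = k%:~R.

(* F is a lift of an element of Thompson's group T:
   - F is an increasing homeomorphism of R commuting with x |-> x+1
     (i.e. a lift of an orientation-preserving homeomorphism of T);
   - there is a finite set s of dyadic break points such that on any
     interval containing no point of s + Z, F is affine with slope an
     integer power of 2;
   - F maps dyadic points to dyadic points. *)
Definition thompsonT {R : realType} (F : R -> R) : Prop :=
  [/\ continuous F,
      (forall x y : R, x < y -> F x < F y),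
      (forall x : R, F (x + 1) = F x + 1),
      (forall x : R, dyadic x -> dyadic (F x)) &
      exists s : seq R, (forall d, d \in s -> dyadic d) /\
        forall a b : R, a < b ->
          (forall x (k : int), a < x < b -> (x - k%:~R) \notin s) ->
          exists (z : int) (c : R), forall x, a <= x <= b -> F x = 2 ^ z * x + c].

Definition affine_on {R : realType} (F : R -> R) (a b : R) : Prop :=
  exists s c : R, forall x, a < x < b -> F x = s * x + c.

(* (a,b), an arc of the circle (length <= 1), is an interval of linearity
   of F: F is affine on it and it is maximal with this property. *)
Definition interval_of_linearity {R : realType} (F : R -> R) (a b : R) : Prop :=
  [/\ a < b, b - a <= 1, affine_on F a b &
      forall a' b' : R, a' <= a -> b <= b' -> b' - a' <= 1 ->
        affine_on F a' b' -> a' = a /\ b' = b].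

From HB Require Import structures.
From mathcomp Require Import all_boot all_order all_algebra.
From mathcomp Require Import all_classical all_reals.
From mathcomp Require Import all_analysis.
From mathcomp Require Import lra zify ring.
Set Implicit Arguments. Unset Strict Implicit. Unset Printing Implicit Defensive.
Import Order.TTheory GRing.Theory Num.Theory numFieldNormedType.Exports.
Local Open Scope ring_scope.

(* Away from the integer translates of the finitely many break points, F is
   x |-> 2^z x + c; since F maps a dyadic point of such a piece to a dyadic
   point, the constant c is dyadic, and this affine formula holds on the
   whole interval of linearity.  Writing 2^z = 2^p / 2^q and c = k / 2^j,
   2^(q+j) (2^z x + c) - 2^(p+j) x = 2^q k is an integer. *)

Lemma exprz_ratio {F : fieldType} (w : F) (z : int) :
  exists p q : nat, w ^ z = w ^+ p / w ^+ q.
Proof.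
case: z => p; first by exists p, 0%N; rewrite expr0 divr1.
by exists 0%N, p.+1; rewrite expr0 div1r.
Qed.

Lemma affine_eq2 (F : fieldType) (s s' c c' x1 x2 : F) : x1 != x2 ->
  s * x1 + c = s' * x1 + c' -> s * x2 + c = s' * x2 + c' -> s = s' /\ c = c'.
Proof.
move=> x12 e1 e2.
have slope : (s - s') * (x2 - x1) = 0.
  by rewrite mulrBl !mulrBr -[s * x2](addrK c) e2 -[s * x1](addrK c) e1; ring.
have ss' : s = s'.
  apply/eqP; rewrite -subr_eq0; move/eqP: slope; rewrite mulf_eq0 => /orP[//|].
  by move=> /eqP/subr0_eq x21; rewrite x21 eqxx in x12.
by split=> //; move: e1; rewrite ss' => /addrI.
Qed.

Section Dyadic.
Variable R : realType.
Implicit Types x y : R.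

Lemma interval_avoid_translates (s : seq R) (a b : R) : a < b ->
  exists a1 b1, [/\ a <= a1, a1 < b1, b1 <= b &
    forall x (k : int), a1 < x < b1 -> x - k%:~R \notin s].
Proof.
elim: s a b => [|d s IH] a b ab; first by exists a, b; split.
have [p [q [ap pq qb avoid_s]]] := IH a b ab.
(* y is the first translate d + k of d beyond p *)
set k : int := Num.floor (p - d) + 1; set y : R := d + k%:~R.
have /andP[fl_le fl_gt] := floor_itv (p - d).
have py : p < y by rewrite /y /k intrD; lra.
exists p, (Num.min q y); split => //; first by rewrite lt_min pq py.
  by rewrite ge_min qb.
move=> x k' /andP[px]; rewrite lt_min => /andP[xq xy].
rewrite in_cons negb_or avoid_s ?px ?xq // andbT.
apply/eqP => x_transl; have x_eq : x = d + k'%:~R by rewrite -x_transl; ring.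
have [k'_lt|] := ltP k' k; last by rewrite -(ler_int R) /y in xy *; lra.
have : k' <= Num.floor (p - d) by lia.
by rewrite -(ler_int R); lra.
Qed.

Lemma dyadic_dense (a b : R) : a < b -> exists2 x, dyadic x & a < x < b.
Proof.
move=> ab; set n := Num.truncn ((b - a)^-1).
have gap_gt0 : 0 < b - a by lra.
have pow_gt0 : (0 : R) < 2 ^+ n.+1 by apply: exprn_gt0.
have pow_gap : 1 < (b - a) * 2 ^+ n.+1.
  have n_lt_pow : (n.+1%:R : R) <= 2 ^+ n.+1.
    by rewrite -natrX ler_nat ltnW // ltn_expl.
  have inv_lt : (b - a)^-1 < 2 ^+ n.+1.
    by apply: lt_le_trans (truncnS_gt _) n_lt_pow.
  by rewrite -ltr_pdivrMl // mulr1.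
pose k : int := Num.floor (a * 2 ^+ n.+1) + 1.
exists (k%:~R / 2 ^+ n.+1); first by exists k, n.+1.
have /andP[fl_le fl_gt] := floor_itv (a * 2 ^+ n.+1).
rewrite intrD ltr_pdivlMr // ltr_pdivrMr //; apply/andP; split; lra.
Qed.

Lemma dyadicB x y : dyadic x -> dyadic y -> dyadic (x - y).
Proof.
move=> [k [j ->]] [k' [j' ->]].
exists (k * 2 ^+ j' - k' * 2 ^+ j), (j + j')%N.
rewrite rmorphB !rmorphM !rmorphXn /= exprD; field.
by rewrite !expf_neq0.
Qed.

Lemma dyadic_exprzM (z : int) x : dyadic x -> dyadic (2 ^ z * x).
Proof.
move=> [k [j ->]]; have [p [q ->]] := exprz_ratio (2 : R) z.
exists (k * 2 ^+ p), (q + j)%N; rewrite rmorphM rmorphXn /= exprD; field.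
by rewrite !expf_neq0.
Qed.

Lemma affine_dyadic_dynamical (z : int) (c : R) : dyadic c ->
  exists m n : nat, forall x, circ_eq (2 ^+ m * (2 ^ z * x + c)) (2 ^+ n * x).
Proof.
move=> [k [j ->]]; have [p [q ->]] := exprz_ratio (2 : R) z.
exists (q + j)%N, (p + j)%N => x; exists (2 ^+ q * k).
rewrite rmorphM rmorphXn /= !exprD; field.
by rewrite !expf_neq0.
Qed.

Lemma thompsonT_affine_dyadic (F : R -> R) (a b : R) :
  thompsonT F -> a < b -> affine_on F a b ->
  exists (z : int) (c : R), dyadic c /\ forall x, a < x < b -> F x = 2 ^ z * x + c.
Proof.
move=> [_ _ _ F_dyadic [s [_ F_pieces]]] ab [s0 [c0 F_aff]].
have [a1 [b1 [aa1 a1b1 b1b avoid_s]]] := interval_avoid_translates s ab.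
have [z [c F_piece]] := F_pieces a1 b1 a1b1 avoid_s.
have [x0 x0_dyadic /andP[a1x0 x0b1]] := dyadic_dense a1b1.
pose x1 := (x0 + b1) / 2.
have Fx0 : F x0 = 2 ^ z * x0 + c by apply: F_piece; lra.
have [s0E c0E] : s0 = 2 ^ z /\ c0 = c.
  apply: (@affine_eq2 _ _ _ _ _ x0 x1); first by apply/eqP; rewrite /x1; lra.
    by rewrite -F_aff -?Fx0 //; lra.
  by rewrite -F_aff -?F_piece // /x1; lra.
exists z, c; split; last by move=> x /F_aff; rewrite s0E c0E.
have -> : c = F x0 - 2 ^ z * x0 by rewrite Fx0; ring.
exact: dyadicB (F_dyadic _ x0_dyadic) (dyadic_exprzM z x0_dyadic).
Qed.

End Dyadic.

Theorem corollary5p3 (R : realType) (F : R -> R) :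
  thompsonT F ->
  forall a b : R, interval_of_linearity F a b ->
  exists m n : nat, forall x : R, a < x < b ->
    circ_eq (2 ^+ m * F x) (2 ^+ n * x).
Proof.
move=> FT a b [ab _ F_aff _].
have [z [c [c_dyadic F_eq]]] := thompsonT_affine_dyadic FT ab F_aff.
have [m [n dynamical]] := affine_dyadic_dynamical z c_dyadic.
by exists m, n => x /F_eq ->; apply: dynamical.
Qed.
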